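(* Let $r\ge1$, $B>0$, $P$ a finite arc set with $c\in\mathbb{R}_{\ge0}^P$ and $P_+=\{a\in P:c_a>0\}\neq\emptyset$. The minimum of $\sum_{a\in P_+}c_a y_a$ over $y\in\mathbb{R}_{>0}^{P_+}$ with $\sum_{a\in P_+}y_a^{-r}=B$ is attained uniquely at $y_a=\dfrac{\left(\sum_{a'\in P}c_{a'}^{r/(r+1)}\right)^{1/r}}{c_a^{1/(r+1)}B^{1/r}}$ for $a\in P_+$, and the minimum value equals $\left(\sum_{a\in P}\left(c_a/B^{1/r}\right)^{r/(r+1)}\right)^{(r+1)/r}$. Consequently, the optimal value (infimum) of the Network Design Problem with $\bar y\equiv\infty$ equals $\min_{P\in\mathcal{P}}\left[\left(\sum_{a\in P}c'_a\right)^{(r+1)/r}+\sum_{a\in P}\gamma_a\right]$ where $c'_a=(c_a/B^{1/r})^{r/(r+1)}$ and $\mathcal{P}$ is the set of $s$--$t$ paths of $G$.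
   Context: Fix $r\ge1$. Let $G=(V,A)$ be a weakly connected directed graph with distinct source $s$ and sink $t$; $\mathcal P$ denotes the set of (arc sets of) $s$--$t$ paths in the underlying undirected graph. For $y\in\mathbb{R}_{\ge 0}^A$ let $\operatorname{supp}(y)=\{a: y_a>0\}$, $G'=(V,\operatorname{supp}(y))$ with node-arc incidence matrix $\Gamma'$, and $R^y_{s,t}=\min\{\sum_{a\in\operatorname{supp}(y)} |f_a|^{r+1}/y_a^{r} : \Gamma' f=\mathbf{1}_s-\mathbf{1}_t\}$ ($=\infty$ if $s,t$ are disconnected in $G'$). The Network Design Problem, given $c,\gamma\in\mathbb{R}_{\ge0}^A$, bounds $\bar y\in(\mathbb{R}_{\ge0}\cup\{\infty\})^A$ and $B>0$, asks for the infimum of $\sum_{a\in A}(c_a y_a+\gamma_a x_a)$ over $x\in\{0,1\}^A$, $y\in\mathbb{R}_{\ge0}^A$ subject to $R^y_{s,t}\le B$, $y_a\le \bar y_a$, and $y_a>0\Rightarrow x_a=1$ for all $a$. *)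

From HB Require Import structures.
From mathcomp Require Import all_boot all_order all_algebra.
From mathcomp Require Import all_classical all_reals all_analysis.
Set Implicit Arguments. Unset Strict Implicit. Unset Printing Implicit Defensive.
Import Order.TTheory GRing.Theory Num.Theory.
Local Open Scope ring_scope.
Local Open Scope classical_set_scope.

Section NDP.
Variables (R : realType) (V A : finType) (src tgt : A -> V).

Definition uadj : rel V := fun u v =>
  [exists a, ((src a == u) && (tgt a == v)) || ((src a == v) && (tgt a == u))].

Definition weakly_connected : Prop := forall u v : V, connect uadj u v.

Definition joins (a : A) (u v : V) : bool :=
  ((src a == u) && (tgt a == v)) || ((src a == v) && (tgt a == u)).

Definition is_st_path (s t : V) (P : {set A}) : Prop :=
  exists (p : seq A) (vs : seq V),
    [/\ size vs = (size p).+1, head s vs = s /\ last s vs = t, uniq vs,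
        (forall (i : nat) (a0 : A), (i < size p)%N ->
            joins (nth a0 p i) (nth s vs i) (nth s vs i.+1)) &
        P = [set a in p]].

Definition supp (y : A -> R) : pred A := fun a => 0 < y a.

(* f is a unit s--t flow on G' = (V, supp y):  Gamma' f = 1_s - 1_t,
   with f represented on A and vanishing outside supp y. *)
Definition is_unit_flow (s t : V) (y : A -> R) (f : A -> R) : Prop :=
  (forall a, ~~ supp y a -> f a = 0) /\
  forall v : V, \sum_(a | src a == v) f a - \sum_(a | tgt a == v) f a
                = (v == s)%:R - (v == t)%:R.

(* R^y_{s,t}; the infimum of the empty set is +oo (s,t disconnected in G') *)
Definition Reff (r : R) (s t : V) (y : A -> R) : \bar R :=
  ereal_inf [set (\sum_(a | supp y a) (`|f a| `^ (r + 1) / y a `^ r))%:E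
            | f in [set f | is_unit_flow s t y f]].

(* NDP objective and feasibility (with upper bounds ybar == +oo, i.e. none) *)
Definition ndp_obj (c gamma : A -> R) (x : A -> bool) (y : A -> R) : R :=
  \sum_a (c a * y a + gamma a * (x a)%:R).

Definition ndp_feasible (r B : R) (s t : V) (x : A -> bool) (y : A -> R) : Prop :=
  [/\ forall a, 0 <= y a,
      (Reff r s t y <= B%:E)%E
    & forall a, 0 < y a -> x a].

Definition ndp_value (r B : R) (s t : V) (c gamma : A -> R) : \bar R :=
  ereal_inf [set (ndp_obj c gamma xy.1 xy.2)%:E
            | xy in [set xy : (A -> bool) * (A -> R) | ndp_feasible r B s t xy.1 xy.2]].

Definition cprime (r B : R) (c : A -> R) (a : A) : R :=
  (c a / B `^ (r^-1)) `^ (r / (r + 1)).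

Definition path_value (r B : R) (c gamma : A -> R) (P : {set A}) : R :=
  (\sum_(a in P) cprime r B c a) `^ ((r + 1) / r) + \sum_(a in P) gamma a.

End NDP.

From HB Require Import structures.
From mathcomp Require Import all_boot all_order all_algebra.
From mathcomp Require Import all_classical all_reals all_analysis.
From mathcomp Require Import lra ring zify.
Import Order.TTheory GRing.Theory Num.Theory.

Set Implicit Arguments.
Unset Strict Implicit.
Unset Printing Implicit Defensive.
Local Open Scope ring_scope.

(* Write alpha = r / (r + 1).  Hoelder's inequality
     sum u ^ alpha * v ^ (1 - alpha) <= (sum u) ^ alpha * (sum v) ^ (1 - alpha),
   applied to u = c y and v = |f| ^ (r + 1) / y ^ r, gives for every flow f
     (sum c ^ alpha * |f|) ^ (1 / alpha) <= (sum c y) * energy(f) ^ (1 / r).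
   On a single path (|f| = 1) this is the lower bound of the single-path problem,
   and the equality case of Hoelder determines its unique minimiser.
   For an arbitrary design y, take a unit flow f of energy close to R^y_{s,t} <= B.
   Shortest-path distances for the weights c ^ alpha inside supp y form a potential
   that is Lipschitz along the arcs, and pairing it with f (weak duality) yields an
   s-t path P inside supp y with sum_P c ^ alpha <= sum c ^ alpha * |f|; hence the
   design costs at least the path value of P.  Conversely, the path value of any path
   is approached by scaling up the single-path optimum along it and giving the
   zero-cost arcs of the path large capacities. *)

Section WeightedAMGM.
Variable R : realType.

Lemma ln_le_subr1 (x : R) : 0 < x -> ln x <= x - 1.
Proof. by move=> x0; have := expR_ge1Dx (ln x); rewrite lnK ?posrE //; lra. Qed.

Lemma ln_lt_subr1 (x : R) : 0 < x -> x != 1 -> ln x < x - 1.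
Proof.
move=> x0 x1; have : ln x != 0 by rewrite ln_eq0.
by move=> /expR_gt1Dx; rewrite lnK ?posrE //; lra.
Qed.

Lemma powR_amgm_pos (a u v : R) : 0 < a < 1 -> 0 < u -> 0 < v ->
  u `^ a * v `^ (1 - a) <= a * u + (1 - a) * v ?= iff (u == v).
Proof.
(* The tangent bound ln x <= x - 1 at x = u / m and x = v / m, with m the weighted mean. *)
move=> /andP[a0 a1] u0 v0; set m := a * u + (1 - a) * v.
have m0 : 0 < m by rewrite /m; nra.
have lnm : a * ln (u / m) + (1 - a) * ln (v / m) = ln (u `^ a * v `^ (1 - a)) - ln m.
  by rewrite !ln_div ?lnM ?ln_powR ?posrE ?powR_gt0 //; ring.
have sum1 : a * (u / m - 1) + (1 - a) * (v / m - 1) = 0.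
  by rewrite /m; field; rewrite gt_eqF.
have lnv := ln_le_subr1 (divr_gt0 v0 m0).
have lnu := ln_le_subr1 (divr_gt0 u0 m0).
have le_m : ln (u `^ a * v `^ (1 - a)) <= ln m by nra.
split; first by rewrite -ler_ln ?posrE ?mulr_gt0 ?powR_gt0.
apply/idP/eqP => [/eqP eq_m|uv]; last first.
  rewrite /m -uv (_ : a * u + (1 - a) * u = u); last by ring.
  rewrite -powRD; last by rewrite (gt_eqF u0) implybT.
  by rewrite addrC subrK powRr1 ?(ltW u0).
have um : u / m == 1.
  apply: contraT => /(ln_lt_subr1 (divr_gt0 u0 m0)) lnu'.
  have : ln (u `^ a * v `^ (1 - a)) < ln m by nra.
  by rewrite eq_m ltxx.
have {}um : u = m by apply/divr1_eq/eqP.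
by move: um; rewrite /m => /eqP; rewrite -subr_eq0; nra.
Qed.

Lemma powR_leif_amgm (a u v : R) : 0 < a < 1 -> 0 <= u -> 0 <= v ->
  u `^ a * v `^ (1 - a) <= a * u + (1 - a) * v ?= iff (u == v).
Proof.
move=> a01; have /andP[a0 a1] := a01.
have a_neq0 : a != 0 by rewrite gt_eqF.
have a1_neq0 : 1 - a != 0 by rewrite subr_eq0 eq_sym lt_eqF.
rewrite le0r => /predU1P[-> v0|u0].
  rewrite powR0 // mul0r mulr0 add0r; split; first by rewrite mulr_ge0 // subr_ge0 ltW.
  by rewrite eq_sym mulf_eq0 (negbTE a1_neq0) eq_sym.
rewrite le0r => /predU1P[->|v0]; last exact: powR_amgm_pos.
rewrite powR0 // mulr0 mulr0 addr0; split; first by rewrite mulr_ge0 // ltW.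
by rewrite eq_sym mulf_eq0 (negbTE a_neq0).
Qed.

End WeightedAMGM.

Section Hoelder.
Variables (R : realType) (I : finType) (D : pred I) (a : R) (u v : I -> R).
Hypotheses (a01 : 0 < a < 1)
  (u_ge0 : forall i, D i -> 0 <= u i) (v_ge0 : forall i, D i -> 0 <= v i).

Local Notation U := (\sum_(i | D i) u i).
Local Notation W := (\sum_(i | D i) v i).

Lemma hoelder_sum_leif : 0 < U -> 0 < W ->
  \sum_(i | D i) u i `^ a * v i `^ (1 - a) <= U `^ a * W `^ (1 - a)
    ?= iff [forall (i | D i), u i / U == v i / W].
Proof.
move=> U0 W0; set C := U `^ a * W `^ (1 - a).
have C0 : 0 < C by rewrite mulr_gt0 ?powR_gt0.
have scale i : D i ->
    u i `^ a * v i `^ (1 - a) = C * ((u i / U) `^ a * (v i / W) `^ (1 - a)).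
  move=> Di; rewrite /C mulrACA -!powRM ?powR_ge0 ?divr_ge0 ?u_ge0 ?v_ge0 ?ltW //.
  by rewrite ![_ * (_ / _)]mulrC !divfK ?lt0r_neq0.
have amgm := leif_sum (fun (i : I) (Di : D i) => powR_leif_amgm a01
  (divr_ge0 (u_ge0 Di) (ltW U0)) (divr_ge0 (v_ge0 Di) (ltW W0))).
have mean1 : \sum_(i | D i) (a * (u i / U) + (1 - a) * (v i / W)) = 1.
  by rewrite big_split /= -!mulr_sumr -!mulr_suml !divff ?gt_eqF // !mulr1 addrC subrK.
rewrite mean1 in amgm; rewrite (eq_bigr _ scale) -mulr_sumr.
have C_leif : C <= C ?= iff true by apply/leif_refl.
have := leif_pM (ltW C0) _ C_leif amgm.
by rewrite !mulr1 (gt_eqF C0); apply; rewrite sumr_ge0 // => i Di; rewrite mulr_ge0 ?powR_ge0.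
Qed.

Lemma hoelder_sum :
  \sum_(i | D i) u i `^ a * v i `^ (1 - a) <= U `^ a * W `^ (1 - a).
Proof.
have /andP[a0 a1] := a01.
have vanish (w : I -> R) p : p != 0 -> (forall i, D i -> 0 <= w i) ->
    \sum_(i | D i) w i = 0 -> forall i, D i -> w i `^ p = 0.
  by move=> p0 w_ge0 /psumr_eq0P w0 i Di; rewrite w0 ?powR0.
have rhs_ge0 : 0 <= U `^ a * W `^ (1 - a) by rewrite mulr_ge0 ?powR_ge0.
have : 0 <= U := sumr_ge0 _ u_ge0; rewrite le0r => /predU1P[U0|U0].
  rewrite big1 // => i Di; rewrite (vanish u) ?mul0r ?gt_eqF //.
have : 0 <= W := sumr_ge0 _ v_ge0; rewrite le0r => /predU1P[W0|W0].
  rewrite big1 // => i Di; rewrite (vanish v) ?mulr0 // subr_eq0 eq_sym lt_eqF //.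
exact: hoelder_sum_leif.
Qed.

Lemma hoelder_sum_eq : 0 < U -> 0 < W ->
  \sum_(i | D i) u i `^ a * v i `^ (1 - a) = U `^ a * W `^ (1 - a) ->
  forall i, D i -> u i / U = v i / W.
Proof.
move=> U0 W0 /eqP; case: (hoelder_sum_leif U0 W0) => _ ->.
by move=> /forall_inP eq_i i Di; apply/eqP/eq_i.
Qed.

End Hoelder.

Lemma alpha_itv (R : realType) (r : R) : 0 < r -> 0 < r / (r + 1) < 1.
Proof. by move=> r0; rewrite divr_gt0 ?addr_gt0 //= ltr_pdivrMr ?addr_gt0 // mul1r ltrDl. Qed.

Lemma onem_alpha (R : realType) (r : R) : 0 < r -> 1 - r / (r + 1) = (r + 1)^-1.
Proof. by move=> r0; field; rewrite gt_eqF ?addr_gt0. Qed.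

Section CostEnergy.
Variables (R : realType) (r : R).
Hypothesis r_gt0 : 0 < r.
Local Notation alpha := (r / (r + 1)).

Let r1_gt0 : 0 < r + 1. Proof. by rewrite addr_gt0. Qed.

Lemma powR_cost_energy (c y F : R) : 0 <= c -> 0 < y -> 0 <= F ->
  (c * y) `^ alpha * (F `^ (r + 1) / y `^ r) `^ (1 - alpha) = c `^ alpha * F.
Proof.
move=> c0 y0 F0; rewrite (onem_alpha r_gt0).
rewrite powRM // ?(ltW y0) // powRM ?powR_ge0 ?invr_ge0 ?powR_ge0 //.
rewrite -powRrM mulfV ?lt0r_neq0 // powRr1 // -powRN -powRrM mulNr.
rewrite mulrACA -powRD; last by rewrite (gt_eqF y0) implybT.
by rewrite subrr powRr0 mulr1.
Qed.

Lemma powR_cost_energy1 (x z : R) : 0 <= x -> 0 < z ->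
  (x * z) `^ alpha * (z `^ (- r)) `^ (1 - alpha) = x `^ alpha.
Proof.
by move=> x0 z0; have := powR_cost_energy x0 z0 ler01; rewrite powR1 div1r -powRN mulr1.
Qed.

Lemma powR_alpha_inv_le (X U Q : R) : 0 <= X -> 0 <= U -> 0 <= Q ->
  X <= U `^ alpha * Q `^ (1 - alpha) -> X `^ ((r + 1) / r) <= U * Q `^ r^-1.
Proof.
move=> X0 U0 Q0 XUQ.
have e_ge0 : 0 <= (r + 1) / r by rewrite divr_ge0 ?ltW.
apply: le_trans (ge0_ler_powR e_ge0 _ _ XUQ) _; rewrite ?nnegrE ?mulr_ge0 ?powR_ge0 //.
rewrite powRM ?powR_ge0 // (onem_alpha r_gt0) -!powRrM.
have -> : alpha * ((r + 1) / r) = 1 by field; rewrite !gt_eqF.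
have -> : (r + 1)^-1 * ((r + 1) / r) = r^-1 by field; rewrite !gt_eqF.
by rewrite powRr1.
Qed.

Lemma cost_energy_hoelder (I : finType) (D : pred I) (c y f : I -> R) :
  (forall i, D i -> 0 <= c i) -> (forall i, D i -> 0 < y i) ->
  (\sum_(i | D i) c i `^ alpha * `|f i|) `^ ((r + 1) / r) <=
  (\sum_(i | D i) c i * y i) * (\sum_(i | D i) `|f i| `^ (r + 1) / y i `^ r) `^ r^-1.
Proof.
move=> c_ge0 y_gt0.
have cy_ge0 i : D i -> 0 <= c i * y i by move=> Di; rewrite mulr_ge0 ?c_ge0 ?ltW ?y_gt0.
have E_ge0 i : D i -> 0 <= `|f i| `^ (r + 1) / y i `^ r by move=> Di; rewrite divr_ge0 ?powR_ge0.
apply: powR_alpha_inv_le.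
- by rewrite sumr_ge0 // => i _; rewrite mulr_ge0 ?powR_ge0.
- exact: sumr_ge0.
- exact: sumr_ge0.
rewrite -(eq_bigr _ (fun i Di => powR_cost_energy (c_ge0 i Di) (y_gt0 i Di) (normr_ge0 (f i)))).
exact: hoelder_sum (alpha_itv r_gt0) cy_ge0 E_ge0.
Qed.

Lemma sum_powR_scale (T : finType) (P : {set T}) (c : T -> R) (b : R) :
  0 < b -> (forall a, a \in P -> 0 <= c a) ->
  (\sum_(a in P) (c a / b) `^ alpha) `^ ((r + 1) / r) =
  (\sum_(a in P) c a `^ alpha) `^ ((r + 1) / r) / b.
Proof.
move=> b0 c_ge0.
rewrite (eq_bigr (fun a => c a `^ alpha * b^-1 `^ alpha)); last first.
  by move=> a aP; rewrite powRM ?c_ge0 ?invr_ge0 ?ltW.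
have S_ge0 : 0 <= \sum_(a in P) c a `^ alpha by rewrite sumr_ge0 // => a _; rewrite powR_ge0.
rewrite -mulr_suml powRM ?powR_ge0 // -powRrM.
have -> : alpha * ((r + 1) / r) = 1 by field; rewrite !gt_eqF.
by rewrite powRr1 // invr_ge0 ltW.
Qed.

End CostEnergy.

Lemma eq_ln (R : realType) (x y : R) : 0 < x -> 0 < y -> ln x = ln y -> x = y.
Proof. by move=> x0 y0 /ln_inj; apply; rewrite posrE. Qed.

Ltac powR_pos := rewrite ?posrE; repeat first
  [ apply: mulr_gt0 | apply: divr_gt0 | apply: powR_gt0 | rewrite invr_gt0 ]; done.

Ltac ln_expand :=
  repeat first [ rewrite ln_powR | rewrite lnM; try powR_pos | rewrite lnV; try powR_pos ].

(* An identity between positive products of real powers becomes linear after taking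
   logarithms. *)
Ltac ln_field := apply: eq_ln; try powR_pos; ln_expand; field; repeat (apply/andP; split); done.

Lemma cost_balance_powR (R : realType) (r b c y v : R) :
  0 < b -> 0 < c -> 0 < y -> 0 < v ->
  c * y / v = y `^ (- r) / b -> y `^ (r + 1) = v / (b * c).
Proof.
move=> b0 c0 y0 v0 /(congr1 (@ln _)) ln_eq; apply: eq_ln; try powR_pos; move: ln_eq.
by ln_expand; rewrite mulrDl mul1r mulNr; lra.
Qed.

Lemma sum_pos_part (R : realDomainType) (T : finType) (P : {set T}) (c F : T -> R) :
  (forall a, a \in P -> 0 <= c a) -> (forall a, c a = 0 -> F a = 0) ->
  \sum_(a in P) F a = \sum_(a in [set a in P | 0 < c a]) F a.
Proof.
move=> c_ge0 F0; rewrite (bigID (fun a => 0 < c a)) /= [X in _ + X]big1 ?addr0.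
  by apply: eq_bigl => a; rewrite inE.
by move=> a /andP[aP]; rewrite -leNgt => c_le0; apply/F0/le_anti; rewrite c_le0 c_ge0.
Qed.

Section SinglePath.
Variables (R : realType) (r B : R) (T : finType) (P : {set T}) (c : T -> R).
Hypotheses (r_gt0 : 0 < r) (B_gt0 : 0 < B) (c_ge0 : forall a, a \in P -> 0 <= c a).

Local Notation alpha := (r / (r + 1)).
Local Notation Pp := [set a in P | 0 < c a].
Local Notation S := (\sum_(a in P) c a `^ alpha).
Local Notation ystar := (fun a => S `^ r^-1 / (c a `^ (r + 1)^-1 * B `^ r^-1)).
Local Notation feasible := (fun y : T -> R =>
  (forall a, a \in Pp -> 0 < y a) /\ \sum_(a in Pp) y a `^ (- r) = B).
Local Notation obj := (fun y : T -> R => \sum_(a in Pp) c a * y a).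
Local Notation val := ((\sum_(a in P) (c a / B `^ r^-1) `^ alpha) `^ ((r + 1) / r)).

Hypothesis Pp_neq0 : Pp != finset.set0.

Let r_neq0 : r != 0. Proof. by rewrite gt_eqF. Qed.
Let r1_neq0 : r + 1 != 0. Proof. by rewrite gt_eqF // addr_gt0. Qed.
Let alpha_neq0 : alpha != 0. Proof. by case/andP: (alpha_itv r_gt0) => /gt_eqF ->. Qed.

Let c_Pp a : a \in Pp -> 0 < c a. Proof. by rewrite inE => /andP[]. Qed.

Lemma sum_powR_supp : S = \sum_(a in Pp) c a `^ alpha.
Proof. by apply: sum_pos_part => // a ->; rewrite powR0. Qed.

Lemma S_gt0 : 0 < S.
Proof.
have [a aPp] := set0Pn _ Pp_neq0.
rewrite sum_powR_supp (bigD1 a) //= ltr_wpDr ?powR_gt0 ?c_Pp //.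
by rewrite sumr_ge0 // => i _; rewrite powR_ge0.
Qed.

Lemma single_path_val : val = S `^ ((r + 1) / r) / B `^ r^-1.
Proof. by rewrite sum_powR_scale ?powR_gt0. Qed.

Lemma ystar_gt0 a : a \in Pp -> 0 < ystar a.
Proof. move=> /c_Pp ca; have S0 := S_gt0; powR_pos. Qed.

Lemma ystar_powRN a : a \in Pp -> ystar a `^ (- r) = c a `^ alpha * B / S.
Proof. move=> /c_Pp ca; have S0 := S_gt0; ln_field. Qed.

Lemma ystar_cost a : a \in Pp -> c a * ystar a = c a `^ alpha * (S `^ r^-1 / B `^ r^-1).
Proof. move=> /c_Pp ca; have S0 := S_gt0; ln_field. Qed.

Lemma ystar_feasible : feasible ystar.
Proof.
split; first exact: ystar_gt0.
rewrite (eq_bigr _ ystar_powRN) -!mulr_suml -sum_powR_supp.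
by field; rewrite gt_eqF // S_gt0.
Qed.

Lemma ystar_obj : obj ystar = val.
Proof.
rewrite /= (eq_bigr _ ystar_cost) -mulr_suml -sum_powR_supp single_path_val.
have S0 := S_gt0; ln_field.
Qed.

Lemma single_path_lower_bound y : feasible y -> val <= obj y.
Proof.
move=> [y_gt0 sum_y].
have c_ge0' a : a \in Pp -> 0 <= c a by move/c_Pp/ltW.
have := cost_energy_hoelder r_gt0 (fun=> 1) c_ge0' y_gt0.
under eq_bigr do rewrite normr1 mulr1.
under [X in _ * X `^ _]eq_bigr do rewrite normr1 powR1 div1r -powRN.
rewrite -sum_powR_supp sum_y single_path_val.
by rewrite ler_pdivrMr ?powR_gt0.
Qed.

Lemma single_path_optimal_powR y : feasible y -> obj y = val ->
  forall a, a \in Pp -> y a `^ (r + 1) = val / (B * c a).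
Proof.
move=> [y_gt0 sum_y] obj_y a aPp.
have S0 := S_gt0; have val0 : 0 < val by rewrite single_path_val; powR_pos.
have cy_ge0 i : i \in Pp -> 0 <= c i * y i.
  by move=> iPp; rewrite mulr_ge0 ?ltW ?c_Pp ?y_gt0.
have yr_ge0 i : i \in Pp -> 0 <= y i `^ (- r) by rewrite powR_ge0.
have hoelder_eq : \sum_(i in Pp) (c i * y i) `^ alpha * (y i `^ (- r)) `^ (1 - alpha) =
    (obj y) `^ alpha * (\sum_(i in Pp) y i `^ (- r)) `^ (1 - alpha).
  rewrite (eq_bigr _ (fun i iPp => powR_cost_energy1 r_gt0 (ltW (c_Pp iPp)) (y_gt0 _ iPp))).
  rewrite -sum_powR_supp obj_y sum_y single_path_val (onem_alpha r_gt0); ln_field.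
have := hoelder_sum_eq (alpha_itv r_gt0) cy_ge0 yr_ge0 _ _ hoelder_eq aPp.
rewrite /= obj_y sum_y => /(_ val0 B_gt0).
by apply: cost_balance_powR; rewrite ?c_Pp ?y_gt0.
Qed.

Lemma single_path_unique y : feasible y -> obj y = val ->
  forall a, a \in Pp -> y a = ystar a.
Proof.
move=> feas_y obj_y a aPp.
have [ystar_gt0 _] := ystar_feasible.
apply: (@powR_injective _ (r + 1)); rewrite ?addr_gt0 ?nnegrE ?ltW ?ystar_gt0 ?feas_y.1 //.
by rewrite /= (single_path_optimal_powR feas_y obj_y aPp)
  (single_path_optimal_powR ystar_feasible ystar_obj aPp).
Qed.

Lemma single_path_solution :
  [/\ feasible ystar, obj ystar = val,
      forall y, feasible y -> val <= obj y
    & forall y, feasible y -> obj y = val -> forall a, a \in Pp -> y a = ystar a].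
Proof.
split; [exact: ystar_feasible | exact: ystar_obj |
        exact: single_path_lower_bound | exact: single_path_unique].
Qed.

End SinglePath.

Lemma sumr_subset_le (R : numDomainType) (T : finType) (w : T -> R) (Q P : {set T}) :
  (forall b, 0 <= w b) -> Q \subset P -> \sum_(b in Q) w b <= \sum_(b in P) w b.
Proof.
move=> w_ge0 QP; rewrite [leRHS](big_setID Q) /= (finset.setIidPr QP) lerDl.
exact: sumr_ge0.
Qed.

Lemma sumr_setU1_le (R : numDomainType) (T : finType) (w : T -> R) a (P : {set T}) :
  (forall b, 0 <= w b) -> \sum_(b in a |: P) w b <= \sum_(b in P) w b + w a.
Proof.
move=> w_ge0; have [aP|aP] := boolP (a \in P).
  by rewrite (finset.setUidPr (_ : [set a] \subset P)) ?finset.sub1set ?lerDl.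
by rewrite big_setU1 //= addrC.
Qed.

Section SimpleWalks.
Variables (V A : finType) (src tgt : A -> V) (s : V).

Definition simple_walk (p : seq A) (vs : seq V) (t : V) : Prop :=
  [/\ size vs = (size p).+1, head s vs = s /\ last s vs = t, uniq vs &
      forall i a0, (i < size p)%N -> joins src tgt (nth a0 p i) (nth s vs i) (nth s vs i.+1)].

Lemma is_st_pathP t P :
  is_st_path src tgt s t P <-> exists p vs, simple_walk p vs t /\ P = [set a in p].
Proof.
by split=> [[p [vs [? ? ? ? ->]]]|[p [vs [[? ? ? ?] ->]]]]; exists p, vs.
Qed.

Lemma simple_walk_take p vs t i : simple_walk p vs t -> (i <= size p)%N ->
  simple_walk (take i p) (take i.+1 vs) (nth s vs i).
Proof.
move=> [size_vs [head_vs _] uniq_vs walk] ip; have ivs : (i < size vs)%N by rewrite size_vs.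
split; rewrite ?size_takel ?take_uniq ?size_vs //.
  split; first by case: vs size_vs head_vs {walk uniq_vs ivs}.
  by rewrite -nth_last size_takel // nth_take.
move=> j a0 ji; rewrite !nth_take //; last exact: leq_trans ji _.
exact/walk/(leq_trans ji).
Qed.

Lemma simple_walk_rcons p vs u a v : simple_walk p vs u -> v \notin vs ->
  joins src tgt a u v -> simple_walk (rcons p a) (rcons vs v) v.
Proof.
move=> [size_vs [head_vs last_vs] uniq_vs walk] vvs juv.
have last_p : nth s vs (size p) = u by rewrite -last_vs -nth_last size_vs.
split; rewrite ?size_rcons ?size_vs ?rcons_uniq ?vvs //.
  by rewrite last_rcons; case: vs size_vs head_vs {walk uniq_vs vvs last_vs last_p}.
move=> i a0; rewrite ltnS leq_eqVlt => /predU1P[->|ip].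
  by rewrite !nth_rcons size_vs ltnn eqxx ltnSn ltnn eqxx last_p.
have [ivs i1vs] : (i < (size p).+1)%N /\ (i.+1 < (size p).+1)%N by rewrite !ltnS ltnW.
by rewrite !nth_rcons size_vs ip ivs i1vs; apply: walk.
Qed.

Lemma simple_walk_uniq p vs t : simple_walk p vs t -> uniq p.
Proof.
move=> [size_vs _ uniq_vs walk]; case: p walk size_vs => // a0 p walk size_vs.
apply/(uniqP a0) => i j; rewrite !inE => ip jp eq_ij.
have [ivs i1vs] : (i < size vs)%N /\ (i.+1 < size vs)%N by rewrite size_vs ltnS ltnW.
have [jvs j1vs] : (j < size vs)%N /\ (j.+1 < size vs)%N by rewrite size_vs ltnS ltnW.
(* Both steps join the same two vertices, and [index] in the duplicate-free [vs]
   recovers a step from its endpoints. *)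
move: (walk i a0 ip) (walk j a0 jp); rewrite -eq_ij /joins.
move=> /orP[]/andP[/eqP ei /eqP ei1] /orP[]/andP[/eqP ej /eqP ej1];
move: (congr1 (index^~ vs) (etrans (esym ei) ej)) (congr1 (index^~ vs) (etrans (esym ei1) ej1));
rewrite !index_uniq //; lia.
Qed.

Definition st_path_within (S : pred A) (v : V) (P : {set A}) : Prop :=
  is_st_path src tgt s v P /\ {subset P <= S}.

Lemma st_path_within_nil S : st_path_within S s finset.set0.
Proof.
split=> [|a]; last by rewrite inE.
by apply/is_st_pathP; exists [::], [:: s]; split=> //; apply/setP => a; rewrite !inE.
Qed.

Lemma st_path_within_step S u v a P :
  st_path_within S u P -> S a -> joins src tgt a u v ->
  exists2 P', st_path_within S v P' & P' \subset a |: P.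
Proof.
move=> [/is_st_pathP[p [vs [walk ->]]] PS] Sa juv.
suff [P' [p' [vs' [walk' ->]] sub_p']] : exists2 P',
    (exists p' vs', simple_walk p' vs' v /\ P' = [set b in p']) & P' \subset a |: [set b in p].
  exists [set b in p'] => //; split.
  - by apply/is_st_pathP; exists p', vs'.
  - by move=> b /(fintype.subsetP sub_p'); rewrite in_setU1 => /predU1P[->|/PS].
have [size_vs _ _ _] := walk; have [vvs|vvs] := boolP (v \in vs).
  have ip : (index v vs <= size p)%N by rewrite -ltnS -size_vs index_mem.
  exists [set b in take (index v vs) p]; last first.
    by apply/fintype.subsetP => b; rewrite !inE => /mem_take ->; rewrite orbT.
  exists (take (index v vs) p), (take (index v vs).+1 vs); split=> //.
  by have := simple_walk_take walk ip; rewrite nth_index.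
exists (a |: [set b in p]) => //; exists (rcons p a), (rcons vs v); split.
  exact: simple_walk_rcons walk vvs juv.
by apply/setP => b; rewrite !inE mem_rcons in_cons.
Qed.

Lemma connect_st_path t : connect (uadj src tgt) s t -> exists P, is_st_path src tgt s t P.
Proof.
move=> /connectP[q walk ->].
suff extend u P : st_path_within predT u P -> path (uadj src tgt) u q ->
    exists P', st_path_within predT (last u q) P'.
  by have [P [sP _]] := extend _ _ (st_path_within_nil predT) walk; exists P.
elim: q {walk} u P => [|v q IH] u P uP /=; first by exists P.
case/andP=> /existsP[a juv] walk; have [P' vP' _] := st_path_within_step uP isT juv.
exact: IH vP' walk.
Qed.

End SimpleWalks.

Lemma sum_potential_divergence (R : comPzRingType) (V A : finType) (src tgt : A -> V)
    (d : V -> R) (f : A -> R) :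
  \sum_v d v * (\sum_(a | src a == v) f a - \sum_(a | tgt a == v) f a) =
  \sum_a f a * (d (src a) - d (tgt a)).
Proof.
have part (g : A -> V) : \sum_a f a * d (g a) = \sum_v d v * \sum_(a | g a == v) f a.
  rewrite (partition_big g xpredT) //=; apply: eq_bigr => v _; rewrite mulr_sumr.
  by apply: eq_bigr => a /eqP <-; rewrite mulrC.
under [RHS]eq_bigr do rewrite mulrBr.
by rewrite sumrB !part -sumrB; apply: eq_bigr => v _; rewrite mulrBr.
Qed.

Lemma sum_indicator (R : pzSemiRingType) (T : finType) (d : T -> R) (x : T) :
  \sum_v d v * (v == x)%:R = d x.
Proof.
rewrite (bigD1 x) //= eqxx mulr1 big1 ?addr0 // => v /negbTE ->.
by rewrite mulr0.
Qed.

Section Flows.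
Variables (R : realType) (V A : finType) (src tgt : A -> V).

Lemma unit_flow_potential s t (y f : A -> R) (d : V -> R) :
  is_unit_flow src tgt s t y f -> \sum_a f a * (d (src a) - d (tgt a)) = d s - d t.
Proof.
move=> [_ conserv]; rewrite -sum_potential_divergence.
under eq_bigr do rewrite conserv mulrBr.
by rewrite sumrB !sum_indicator.
Qed.

Lemma simple_walk_unit_flow s p vs t : simple_walk src tgt s p vs t ->
  exists f : A -> R, [/\ forall a, a \notin p -> f a = 0, forall a, `|f a| <= 1
    & forall v, \sum_(a | src a == v) f a - \sum_(a | tgt a == v) f a = (v == s)%:R - (v == t)%:R].
Proof.
case: p => [|a0 p'] walk.
  have [+ [+ +] _ _] := walk; case: vs {walk} => [|x [|]] //= _ -> <-.
  exists (fun=> 0); split=> [//|a|v]; first by rewrite normr0.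
  by rewrite !big1 // !subrr.
set p := a0 :: p' in walk *; have uniq_p := simple_walk_uniq walk.
have [size_vs [head_vs last_vs] uniq_vs joins_p] := walk.
(* Each arc carries +1 or -1 according to the direction in which the walk traverses
   it, so that the divergence telescopes along the walk. *)
pose f a : R := if a \in p then (if src a == nth s vs (index a p) then 1 else -1) else 0.
exists f; split.
- by move=> a ap; rewrite /f (negbTE ap).
- by move=> a; rewrite /f; case: (a \in p); [case: (_ == _)|]; rewrite ?normrN ?normr1 ?normr0.
move=> v.
rewrite (big_mkcond (fun a => src a == v)) (big_mkcond (fun a => tgt a == v)) -sumrB /=.
have ifB (b1 b2 : bool) (x : R) :
    (if b1 then x else 0) - (if b2 then x else 0) = x * (b1%:R - b2%:R).
  by case: b1; case: b2; rewrite ?subrr ?subr0 ?sub0r ?mulr0 ?mulr1 // mulrN mulr1.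
under eq_bigr do rewrite ifB.
rewrite (bigID (mem p)) /= [X in _ + X]big1 ?addr0; last first.
  by move=> a /negbTE ap; rewrite /f ap mul0r.
rewrite -big_uniq // (big_nth a0) /=.
pose g i : R := (nth s vs i == v)%:R.
rewrite (eq_big_nat _ _ (F2 := fun i => - (g i.+1 - g i))); last first.
  move=> i /andP[_]; rewrite -[(size p').+1]/(size p) => ip.
  have ap : nth a0 p i \in p := mem_nth a0 ip.
  have [ivs i1vs] : (i < size vs)%N /\ (i.+1 < size vs)%N by rewrite size_vs ltnS ltnW.
  have vs_neq : nth s vs i.+1 != nth s vs i by rewrite nth_uniq // gtn_eqF.
  rewrite /f ap index_uniq // opprB.
  by case/orP: (joins_p i a0 ip) => /andP[/eqP -> /eqP ->];
    rewrite ?eqxx ?(negbTE vs_neq) ?mul1r ?mulN1r ?opprB.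
rewrite sumrN telescope_sumr // opprB /g nth0 head_vs.
have -> : (size p').+1 = (size vs).-1 by rewrite size_vs.
by rewrite nth_last last_vs ![_ == v]eq_sym.
Qed.

End Flows.

Section Distances.
Variables (R : realDomainType) (V A : finType) (src tgt : A -> V) (s : V).
Variables (S : pred A) (w : A -> R) (K : R).
Hypotheses (w_ge0 : forall a, 0 <= w a) (K_ge0 : 0 <= K).

Local Notation path_to := (st_path_within src tgt s S).

(* [K] is the value at the vertices that cannot be reached inside [S]. *)
Definition st_dist (v : V) : R :=
  \big[Order.min/K]_(P : {set A} | `[< path_to v P >]) \sum_(a in P) w a.

Lemma st_dist_le v P : path_to v P -> st_dist v <= \sum_(a in P) w a.
Proof. by move=> vP; apply: bigmin_le_cond; apply/asboolP. Qed.

Lemma st_dist_le_default v : st_dist v <= K.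
Proof. exact: bigmin_le_id. Qed.

Lemma st_dist_source : st_dist s = 0.
Proof.
apply/le_anti; rewrite (le_trans (st_dist_le (st_path_within_nil _ _ _ _))) ?big_set0 //=.
by apply: le_bigmin => // P _; apply: sumr_ge0.
Qed.

Lemma st_dist_attained v : st_dist v < K ->
  exists2 P, path_to v P & \sum_(a in P) w a = st_dist v.
Proof.
suff [->|//] : st_dist v = K \/ exists2 P, path_to v P & \sum_(a in P) w a = st_dist v.
  by rewrite ltxx.
rewrite /st_dist; elim/big_rec: _ => [|P m /asboolP vP IH]; first by left.
have [le_m|lt_m] := leP (\sum_(a in P) w a) m.
  by right; exists P.
exact: IH.
Qed.

Lemma st_dist_arc a u v : S a -> joins src tgt a u v -> st_dist v <= st_dist u + w a.
Proof.
move=> Sa juv; have [lt_uK|le_Ku] := ltP (st_dist u) K.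
  have [P uP <-] := st_dist_attained lt_uK.
  have [P' vP' sub_P'] := st_path_within_step uP Sa juv.
  rewrite (le_trans (st_dist_le vP')) // (le_trans (sumr_subset_le w_ge0 sub_P')) //.
  exact: sumr_setU1_le.
by rewrite (le_trans (st_dist_le_default v)) // (le_trans le_Ku) // lerDl.
Qed.

Lemma st_dist_lipschitz a : S a -> `|st_dist (src a) - st_dist (tgt a)| <= w a.
Proof.
move=> Sa; have := st_dist_arc Sa (_ : joins src tgt a (src a) (tgt a)).
have := st_dist_arc Sa (_ : joins src tgt a (tgt a) (src a)).
by rewrite /joins !eqxx orbT => /(_ isT) le1 /(_ isT) le2; rewrite ler_norml; lra.
Qed.

End Distances.

(* Weak duality: [st_dist] is [w]-Lipschitz on [supp y], so pairing it with [f] bounds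
   the distance of [t] by the [w]-cost of [f]; the cap [E + 1] makes [t] reachable. *)
Lemma unit_flow_st_path (R : realType) (V A : finType) (src tgt : A -> V) s t (y f w : A -> R) :
  (forall a, 0 <= w a) -> is_unit_flow src tgt s t y f ->
  exists2 P, st_path_within src tgt s (supp y) t P &
    \sum_(a in P) w a <= \sum_(a | supp y a) w a * `|f a|.
Proof.
move=> w_ge0 flow_f; set E := \sum_(a | supp y a) w a * `|f a|.
have E1_ge0 : 0 <= E + 1 by rewrite addr_ge0 // sumr_ge0 // => a _; rewrite mulr_ge0.
pose d := st_dist src tgt s (supp y) w (E + 1).
have dt_le : d t <= E.
  have ds : d s = 0 by apply: st_dist_source.
  have := unit_flow_potential d flow_f; rewrite ds sub0r => /(congr1 -%R).
  rewrite opprK => <-; rewrite -sumrN (bigID (supp y)) /= [X in _ + X]big1 ?addr0; last first.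
    by move=> a /flow_f.1 ->; rewrite mul0r oppr0.
  apply: ler_sum => a ya; rewrite (le_trans (ler_norm _)) // normrN normrM mulrC.
  by rewrite ler_wpM2r // st_dist_lipschitz.
have dt_lt : d t < E + 1 by rewrite (le_lt_trans dt_le) ?ltrDl.
by have [P tP dP] := st_dist_attained dt_lt; exists P; rewrite // dP.
Qed.

Section Resistance.
Variables (R : realType) (V A : finType) (src tgt : A -> V) (r : R) (s t : V) (y : A -> R).

Definition flow_energy (f : A -> R) : R :=
  \sum_(a | supp y a) `|f a| `^ (r + 1) / y a `^ r.

Lemma Reff_le_energy f : is_unit_flow src tgt s t y f ->
  (Reff src tgt r s t y <= (flow_energy f)%:E)%E.
Proof. by move=> flow_f; apply: ereal_inf_lbound; exists f. Qed.

Lemma Reff_lt_energy x : (Reff src tgt r s t y < x%:E)%E ->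
  exists2 f, is_unit_flow src tgt s t y f & flow_energy f < x.
Proof. by case/ereal_inf_lt => _ [f flow_f <-]; rewrite lte_fin; exists f. Qed.

Lemma Reff_le_st_path P : 0 < r -> is_st_path src tgt s t P ->
  (forall a, supp y a = (a \in P)) ->
  (Reff src tgt r s t y <= (\sum_(a in P) y a `^ (- r))%:E)%E.
Proof.
move=> r_gt0 /is_st_pathP[p [vs [walk ->]]] suppE.
have [f [f_out f_le1 conserv]] := simple_walk_unit_flow R walk.
apply: le_trans (Reff_le_energy (f := f) _) _.
  by split=> // a; rewrite suppE inE; apply: f_out.
rewrite lee_fin /flow_energy (eq_bigl _ _ suppE) ler_sum // => a _.
rewrite powRN -[leRHS]mul1r ler_wpM2r ?invr_ge0 ?powR_ge0 //.
have r1_ge0 : 0 <= r + 1 by rewrite addr_ge0 ?ltW.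
by have := ge0_ler_powR r1_ge0 (normr_ge0 (f a)) ler01 (f_le1 a); rewrite powR1.
Qed.

End Resistance.

Section DesignBounds.
Variables (R : realType) (r B : R) (V A : finType) (src tgt : A -> V) (s t : V).
Variables (c gamma : A -> R).
Hypotheses (r_gt0 : 0 < r) (B_gt0 : 0 < B).
Hypotheses (c_ge0 : forall a, 0 <= c a) (gamma_ge0 : forall a, 0 <= gamma a).

Local Notation alpha := (r / (r + 1)).
Local Notation path_value := (path_value r B c gamma).
Local Notation ndp_obj := (ndp_obj c gamma).
Local Notation ndp_feasible := (ndp_feasible src tgt r B s t).

Lemma path_valueE P : path_value P =
  (\sum_(a in P) c a `^ alpha) `^ ((r + 1) / r) / B `^ r^-1 + \sum_(a in P) gamma a.
Proof. by rewrite /path_value /cprime sum_powR_scale ?powR_gt0. Qed.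

Lemma path_value_ge0 P : 0 <= path_value P.
Proof. by rewrite addr_ge0 ?powR_ge0 ?sumr_ge0. Qed.

Lemma ndp_objE x y : (forall a, 0 <= y a) ->
  ndp_obj x y = \sum_(a | supp y a) c a * y a + \sum_a gamma a * (x a)%:R.
Proof.
move=> y_ge0; rewrite /ndp_obj big_split /= (bigID (supp y)) /= [X in _ + X + _]big1 ?addr0 //.
by move=> a; rewrite /supp -leNgt => y_le0; rewrite (@le_anti _ _ (y a) 0) ?y_le0 ?y_ge0 ?mulr0.
Qed.

Lemma path_cost_le_flow_cost y f (P : {set A}) :
  \sum_(a in P) c a `^ alpha <= \sum_(a | supp y a) c a `^ alpha * `|f a| ->
  (\sum_(a in P) c a `^ alpha) `^ ((r + 1) / r) <=
  (\sum_(a | supp y a) c a * y a) * flow_energy r y f `^ r^-1.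
Proof.
move=> weight_P.
apply: le_trans (cost_energy_hoelder r_gt0 f (fun a _ => c_ge0 a) (fun a ya => ya)).
apply: ge0_ler_powR weight_P.
- by rewrite divr_ge0 ?addr_ge0 ?ltW.
- by rewrite nnegrE sumr_ge0 // => a _; rewrite powR_ge0.
- by rewrite nnegrE sumr_ge0 // => a _; rewrite mulr_ge0 ?powR_ge0.
Qed.

(* [Reff y <= B] bounds an infimum, so we only get flows of energy below [B / k ^ r];
   this costs the factor [k]. *)
Lemma ndp_obj_ge_path x y k : ndp_feasible x y -> 0 < k < 1 ->
  exists2 P, is_st_path src tgt s t P & k * path_value P <= ndp_obj x y.
Proof.
move=> [y_ge0 Reff_y x_supp] /andP[k_gt0 k_lt1].
have kr_lt1 : k `^ r < 1.
  by have := gt0_ltr_powR r_gt0 (ltW k_gt0) ler01 k_lt1; rewrite powR1.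
have B_lt : (B%:E < (B / k `^ r)%:E)%E by rewrite lte_fin ltr_pdivlMr ?powR_gt0 // gtr_pMr.
have [f flow_f energy_f] := Reff_lt_energy (le_lt_trans Reff_y B_lt).
have [P [tP P_supp] weight_P] := unit_flow_st_path (fun a => powR_ge0 (c a) alpha) flow_f.
exists P => //; rewrite ndp_objE // path_valueE mulrDr; apply: lerD.
  have r_neq0 : r != 0 by rewrite gt_eqF.
  have Bk : (B / k `^ r) `^ r^-1 = B `^ r^-1 / k by ln_field.
  rewrite mulrA ler_pdivrMr ?powR_gt0 // mulrC -ler_pdivlMr // -mulrA -Bk.
  apply: le_trans (path_cost_le_flow_cost weight_P) _.
  apply: ler_wpM2l; first by rewrite sumr_ge0 // => a ya; rewrite mulr_ge0 ?c_ge0 // ltW.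
  apply: ge0_ler_powR (ltW energy_f).
  - by rewrite invr_ge0 ltW.
  - by rewrite nnegrE sumr_ge0 // => a _; rewrite divr_ge0 ?powR_ge0.
  - by rewrite nnegrE divr_ge0 ?powR_ge0 ?ltW.
rewrite (le_trans (ler_piMl _ (ltW k_lt1))) ?sumr_ge0 //.
have -> : \sum_(a in P) gamma a = \sum_(a in P) gamma a * (x a)%:R.
  by apply: eq_bigr => a aP; rewrite (x_supp a (P_supp a aP)) mulr1.
by rewrite [leRHS](bigID (mem P)) lerDl sumr_ge0 // => a _; rewrite mulr_ge0.
Qed.

Lemma single_path_design (P0 : {set A}) : exists y0 : A -> R,
  [/\ forall a, a \in [set a in P0 | 0 < c a] -> 0 < y0 a,
      \sum_(a in [set a in P0 | 0 < c a]) y0 a `^ (- r) <= B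
    & \sum_(a in [set a in P0 | 0 < c a]) c a * y0 a <=
      (\sum_(a in P0) cprime r B c a) `^ ((r + 1) / r)].
Proof.
have [Pp0|Pp_neq0] := eqVneq [set a in P0 | 0 < c a] finset.set0.
  by exists (fun=> 1); rewrite Pp0 !big_set0; split=> [a||]; rewrite ?inE ?(ltW B_gt0) ?powR_ge0.
have [[ystar_gt0 ystar_energy] ystar_cost _ _] :=
  single_path_solution r_gt0 B_gt0 (fun a _ => c_ge0 a) Pp_neq0.
by eexists; split; [exact: ystar_gt0 | rewrite ystar_energy | rewrite ystar_cost].
Qed.

(* Arcs of positive cost get [k] times the single-path optimum, which leaves an
   energy slack of [(1 - k ^ -r) B]; it is spent on the zero-cost arcs of [P0]. *)
Lemma path_design_scaled (P0 : {set A}) k : 1 < k -> exists y : A -> R,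
  [/\ forall a, supp y a = (a \in P0), forall a, 0 <= y a,
      \sum_(a in P0) y a `^ (- r) <= B
    & \sum_(a in P0) c a * y a <= k * (\sum_(a in P0) cprime r B c a) `^ ((r + 1) / r)].
Proof.
move=> k_gt1; have k_gt0 : 0 < k by apply: lt_trans k_gt1.
set Pp := [set a in P0 | 0 < c a].
have [y0 [y0_gt0 y0_energy y0_cost]] := single_path_design P0.
have kr_lt1 : k `^ (- r) < 1.
  rewrite powRN invf_lt1 ?powR_gt0 //.
  by have := gt0_ltr_powR r_gt0 ler01 (ltW k_gt0) k_gt1; rewrite powR1.
pose m := B * (1 - k `^ (- r)) / #|A|.+1%:R.
have m_gt0 : 0 < m by rewrite divr_gt0 ?mulr_gt0 ?subr_gt0.
pose M := m `^ (- r^-1).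
have Mr : M `^ (- r) = m by rewrite -powRrM mulrNN mulVf ?gt_eqF // powRr1 // ltW.
pose y a := if a \in Pp then k * y0 a else if a \in P0 then M else 0.
exists y; split.
- rewrite /supp /y => a; case: ifPn => [aPp|_].
    by move: (aPp); rewrite inE => /andP[-> _]; rewrite mulr_gt0 ?y0_gt0.
  by case: (a \in P0); rewrite ?powR_gt0 ?ltxx.
- rewrite /y => a; case: ifPn => [aPp|_]; first by rewrite mulr_ge0 ?ltW ?y0_gt0.
  by case: ifP => _; rewrite ?powR_ge0.
- rewrite (bigID (fun a => 0 < c a)) /=.
  have pos_part : \sum_(a in P0 | 0 < c a) y a `^ (- r) = k `^ (- r) * \sum_(a in Pp) y0 a `^ (- r).
    rewrite mulr_sumr; apply: eq_big => [a|a aPp]; first by rewrite inE.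
    have aPp' : a \in Pp by rewrite inE.
    by rewrite /y aPp' powRM ?ltW ?y0_gt0.
  have zero_part : \sum_(a in P0 | ~~ (0 < c a)) y a `^ (- r) <= B * (1 - k `^ (- r)).
    rewrite (eq_bigr (fun=> m)) => [|a /andP[aP0 ca]]; last first.
      have aPp : a \notin Pp by rewrite inE negb_and ca orbT.
      by rewrite /y (negbTE aPp) aP0 Mr.
    apply: (@le_trans _ _ (\sum_(a : A) m)).
      rewrite [leRHS](bigID (fun a => (a \in P0) && ~~ (0 < c a))) /= lerDl.
      by rewrite sumr_ge0 // => a _; rewrite ltW.
    rewrite sumr_const -mulr_natr /m mulrAC ler_pdivrMr ?ltr0Sn // ler_pM2l ?ler_nat //.
    by rewrite mulr_gt0 ?subr_gt0.
  have := ler_wpM2l (powR_ge0 k (- r)) y0_energy.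
  by rewrite pos_part; nra.
rewrite (sum_pos_part (c := c)) => [|a _|a ->]; last 2 first.
- exact: c_ge0.
- by rewrite mul0r.
rewrite (eq_bigr (fun a => k * (c a * y0 a))) => [|a aPp]; last by rewrite /y aPp mulrCA.
by rewrite -mulr_sumr ler_pM2l.
Qed.

Lemma ndp_design_of_path P0 k : is_st_path src tgt s t P0 -> 1 < k ->
  exists x y, ndp_feasible x y /\ ndp_obj x y <= k * path_value P0.
Proof.
move=> P0_path k_gt1; have [y [suppE y_ge0 energy_y cost_y]] := path_design_scaled P0 k_gt1.
exists (fun a => a \in P0), y; split.
  split=> // [|a ya]; last by rewrite /= -suppE.
  by apply: le_trans (Reff_le_st_path r_gt0 P0_path suppE) _; rewrite lee_fin.
rewrite ndp_objE // /path_value mulrDr (eq_bigl _ _ suppE); apply: lerD => //.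
rewrite (eq_bigr (fun a => if a \in P0 then gamma a else 0)) -?big_mkcond; last first.
  by move=> a _; case: (a \in P0); [exact: mulr1 | exact: mulr0].
by rewrite ler_peMl ?sumr_ge0 ?ltW.
Qed.

End DesignBounds.


Lemma ex_minimizer (R : realDomainType) (T : finType) (Q : T -> Prop) (F : T -> R) :
  (exists x, Q x) -> exists x, Q x /\ forall y, Q y -> F x <= F y.
Proof.
move=> [x0 Qx0]; have Qx0b : `[< Q x0 >] by apply/asboolP.
case: (arg_minP (P := fun x => `[< Q x >]) F Qx0b) => x /asboolP Qx minx.
by exists x; split=> // y Qy; apply/minx/asboolP.
Qed.

Lemma lee_of_mulgt1 (R : realType) (x : \bar R) (y : R) : 0 <= y ->
  (forall k, 1 < k -> (x <= (k * y)%:E)%E) -> (x <= y%:E)%E.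
Proof.
move=> y_ge0 le_xy; apply/lee_addgt0Pr => e e_gt0.
have y1_gt0 : 0 < y + 1 by rewrite ltr_wpDl.
have k_gt1 : 1 < 1 + e / (y + 1) by rewrite ltrDl divr_gt0.
apply: le_trans (le_xy _ k_gt1) _; rewrite -EFinD lee_fin mulrDl mul1r lerD2l.
by rewrite mulrAC ler_pdivrMr // ler_pM2l // lerDl.
Qed.

Local Open Scope classical_set_scope.

Theorem mainTheorem8 (R : realType) (r B : R) (hr : 1 <= r) (hB : 0 < B) :
  (* Part 1: the closed-form solution of the single-path subproblem *)
  (forall (T : finType) (P : {set T}) (c : T -> R),
     (forall a, a \in P -> 0 <= c a) ->
     let Pp := [set a in P | 0 < c a] in
     Pp != finset.set0 ->
     let ystar := fun a : T =>
       (\sum_(a' in P) c a' `^ (r / (r + 1))) `^ (r^-1)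
         / (c a `^ ((r + 1)^-1) * B `^ (r^-1)) in
     let feas := fun y : T -> R =>
       (forall a, a \in Pp -> 0 < y a) /\ \sum_(a in Pp) y a `^ (- r) = B in
     let obj := fun y : T -> R => \sum_(a in Pp) c a * y a in
     let val := (\sum_(a in P) (c a / B `^ (r^-1)) `^ (r / (r + 1))) `^ ((r + 1) / r) in
     [/\ feas ystar, obj ystar = val,
         forall y, feas y -> val <= obj y
       & forall y, feas y -> obj y = val -> forall a, a \in Pp -> y a = ystar a]) /\
  (* Part 2: the optimal value of the Network Design Problem with ybar == oo *)
  (forall (V A : finType) (src tgt : A -> V) (s t : V) (c gamma : A -> R),
     weakly_connected src tgt -> s != t ->
     (forall a, 0 <= c a) -> (forall a, 0 <= gamma a) ->
     exists P0 : {set A},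
       [/\ is_st_path src tgt s t P0,
           forall P, is_st_path src tgt s t P ->
             path_value r B c gamma P0 <= path_value r B c gamma P
         & ndp_value src tgt r B s t c gamma = (path_value r B c gamma P0)%:E]).
Proof.
have r_gt0 : 0 < r by apply: lt_le_trans hr.
split=> [T P c c_ge0 Pp Pp_neq0|V A src tgt s t c gamma connected _ c_ge0 gamma_ge0].
  exact: single_path_solution.
have [P1 P1_path] := connect_st_path (connected s t).
have [P0 [P0_path P0_min]] := ex_minimizer (path_value r B c gamma) (ex_intro _ P1 P1_path).
exists P0; split=> //; apply/le_anti/andP; split.
  apply: lee_of_mulgt1; first exact: path_value_ge0.
  move=> k k_gt1.
  have [x [y [feas_xy obj_le]]] := ndp_design_of_path r_gt0 hB c_ge0 gamma_ge0 P0_path k_gt1.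
  apply: (@le_trans _ _ (ndp_obj c gamma x y)%:E); last by rewrite lee_fin.
  by apply: ereal_inf_lbound; exists (x, y).
apply/lee_mul01Pr; first by rewrite lee_fin; apply: path_value_ge0.
move=> k k01; apply: le_ereal_inf_tmp => _ [[x y] /= feas_xy <-].
have [P P_path le_obj] := ndp_obj_ge_path r_gt0 hB c_ge0 gamma_ge0 feas_xy k01.
rewrite -EFinM lee_fin (le_trans _ le_obj) // ler_pM2l ?P0_min //.
by case/andP: k01.
Qed.
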